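(* Let $S,I:\mathbb{R}\to\mathbb{R}$ be $2\pi$-periodic Lipschitz functions and suppose there are $\alpha_0\in(0,\pi)$, $p,q\ge1$, $c_1,c_2>0$, $c_3\in(0,1]$ with $S(\theta)\le-c_1(\pi-\theta)^p$ for $\theta\in[\alpha_0,\pi]$, $S(\theta)\ge c_1(\theta+\pi)^p$ for $\theta\in[-\pi,-\alpha_0]$, $0\le I(\theta)\le c_2(\pi-|\theta|)^q$ for $\theta\in[-\pi,\pi]$, and $\min_{|\phi|\le\max\{|\theta|,\alpha_0\}}I(\phi)\ge c_3I(\theta)$ for $\theta\in[-\pi,\pi]$. Let $(\theta_i(t))$ solve $\dot\theta_i=\omega_i+\frac{\kappa}{N}\sum_{j=1}^NI(\theta_j)S(\theta_i)$, $\theta_i(0)=\theta_i^0$, and $R(t)=\frac1N\sum_jI(\theta_j(t))$. For $\mathcal B\subseteq\{1,\dots,N\}$ let $\|\Omega_{\mathcal B}\|_\infty=\max_{i\in\mathcal B}|\omega_i|$. Suppose $0<\rho\le\|I\|_{\sup}$ and $\mathcal A\subset\mathcal B\subset\{1,\dots,N\}$ satisfy \[ \frac1N\sum_{i\in\mathcal A}I(\theta_i^0)>\frac{\rho}{c_3},\qquad\kappa>\frac{\|\Omega_{\mathcal B}\|_\infty}{\rho c_1(\pi-\alpha_0)^p}, \] and, with $d=\left(\frac{\|\Omega_{\mathcal B}\|_\infty}{\kappa\rho c_1}\right)^{1/p}$, $\theta_i^0\in[-\pi+d,\pi-d]$ for all $i\in\mathcal A$. Then (a) $R(t)>\rho$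 for $t\ge0$; (b) $\theta_i(t)\in[-\pi+d,\pi-d]$ for $i\in\mathcal A$ and $t\ge0$; (c) $\sup_{t\ge0}\theta_i(t)-\inf_{t\ge0}\theta_i(t)<2\pi$ for $i\in\mathcal B$.
   Context: $\|I\|_{\sup}=\sup|I|$. *)

From HB Require Import structures.
From mathcomp Require Import all_boot all_order all_algebra.
From mathcomp Require Import all_classical all_reals all_analysis.
Set Implicit Arguments. Unset Strict Implicit. Unset Printing Implicit Defensive.
Import Order.TTheory GRing.Theory Num.Theory.
Import numFieldNormedType.Exports.
Local Open Scope classical_set_scope.
Local Open Scope ring_scope.

Definition periodic2pi {R : realType} (f : R -> R) : Prop :=
  forall x, f (x + 2 * pi) = f x.

Definition lipschitz_fun {R : realType} (f : R -> R) : Prop :=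
  exists L : R, forall x y, `|f x - f y| <= L * `|x - y|.

Definition supnorm {R : realType} (f : R -> R) : R :=
  sup [set `|f x| | x in [set: R]].

Definition maxabs {R : realType} {N : nat} (om : 'I_N -> R) (B : {set 'I_N}) : R :=
  \big[Num.max/0]_(i in B) `|om i|.

Definition orderR {R : realType} {N : nat} (I : R -> R) (th : 'I_N -> R -> R) (t : R) : R :=
  (N%:R)^-1 * \sum_(j < N) I (th j t).

From HB Require Import structures.
From mathcomp Require Import all_boot all_order all_algebra.
From mathcomp Require Import all_classical all_reals all_analysis.
From mathcomp Require Import ring lra.
Import Order.TTheory GRing.Theory Num.Theory.
Import numFieldNormedType.Exports.
Local Open Scope classical_set_scope.
Local Open Scope ring_scope.

(* While the order parameter r(t) stays above rho, every oscillator i of B obeys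
   theta_i' = omega_i + kappa r(t) S(theta_i) with |omega_i| <= kappa rho c1 d^p.
   A level b = b0 (mod 2 pi) with b0 in [alpha0, pi - d], where S(b) <= -c1 d^p,
   therefore cannot be crossed upwards: above it the Lipschitz bound on S gives
   (theta_i - b)' <= C (theta_i - b), which forbids leaving b.  Symmetrically the
   levels with b0 in [-pi + d, -alpha0] cannot be crossed downwards.  So the
   oscillators of A keep |theta_i(t)| <= max(|theta_i(0)|, alpha0), where
   I(theta_i(t)) >= c3 I(theta_i(0)); hence r(t) >= c3/N sum_A I(theta_i(0)) > rho,
   and a continuity argument shows that r never comes down to rho.  Finally every
   trajectory of B is trapped between two such levels less than 2 pi apart, unless
   it starts in a gap (pi - d, pi + d) mod 2 pi, which it can leave only once. *)

Section Periodicity.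
Context {R : realType}.

Lemma periodic2pi_int {f : R -> R} : periodic2pi f ->
  forall x (k : int), f (x + 2 * pi * k%:~R) = f x.
Proof.
move=> hf.
have hn x (n : nat) : f (x + 2 * pi * n%:R) = f x.
  elim: n => [|n IH]; first by rewrite mulr0 addr0.
  by rewrite -[RHS]IH -[RHS]hf -addrA -[n.+1%:R]natr1 mulrDr mulr1.
move=> x [n|n]; first exact: hn.
by rewrite NegzE mulrNz mulrN -[in RHS](subrK (2 * pi * n.+1%:R) x) hn.
Qed.

Lemma shift_2pi (x a : R) : exists k : int,
  a <= x - 2 * pi * k%:~R < a + 2 * pi.
Proof.
have pi2_gt0 : 0 < 2 * pi :> R by rewrite mulr_gt0 ?pi_gt0.
set t := (x - a) / (2 * pi).
have xt : x - a = t * (2 * pi) by rewrite /t divfK ?gt_eqF.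
exists (Num.floor t).
have t_ge := floor_le t; have t_lt := floorD1_gt t.
rewrite rmorphD /= in t_lt.
set k := (Num.floor t)%:~R in t_ge t_lt *.
have : k * (2 * pi) <= t * (2 * pi) by rewrite ler_pM2r.
have : t * (2 * pi) < (k + 1) * (2 * pi) by rewrite ltr_pM2r.
by move=> *; apply/andP; split; nra.
Qed.

Lemma periodic2pi_bounded {f : R -> R} {lo hi : R} : periodic2pi f ->
  (forall x, - pi <= x <= pi -> lo <= f x <= hi) -> forall x, lo <= f x <= hi.
Proof.
move=> hf hb x; have [k /andP[k1 k2]] := shift_2pi x (- pi).
rewrite -(subrK (2 * pi * k%:~R) x) periodic2pi_int //; apply: hb.
by rewrite k1 /=; lra.
Qed.

Lemma periodic2pi_profile_bound {f : R -> R} {c q : R} :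
  periodic2pi f -> 0 <= c -> 0 <= q ->
  (forall x, - pi <= x <= pi -> 0 <= f x <= c * powR (pi - `|x|) q) ->
  forall x, 0 <= f x <= c * powR pi q.
Proof.
move=> perf c_ge0 q_ge0 f_range; apply: periodic2pi_bounded perf _ => x xI.
have /andP[-> f_le] := f_range x xI; apply: le_trans f_le (ler_wpM2l c_ge0 _).
have x_le : `|x| <= pi by rewrite ler_norml.
by apply: (ge0_ler_powR q_ge0); rewrite ?nnegrE ?gerBl //; lra.
Qed.

End Periodicity.

Section Levels.
Context {R : realType}.

Definition upper_level (a d b : R) :=
  exists k : int, a <= b - 2 * pi * k%:~R <= pi - d.

Definition lower_level (a d b : R) :=
  exists k : int, - pi + d <= b - 2 * pi * k%:~R <= - a.

Lemma upper_level_shift {a d c : R} (k : int) :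
  a <= c <= pi - d -> upper_level a d (c + 2 * pi * k%:~R).
Proof. by exists k; rewrite addrK. Qed.

Lemma lower_level_shift {a d c : R} (k : int) :
  - pi + d <= c <= - a -> lower_level a d (c + 2 * pi * k%:~R).
Proof. by exists k; rewrite addrK. Qed.

Lemma upper_level_top {a d : R} (k : int) :
  a <= pi - d -> upper_level a d (pi - d + 2 * pi * k%:~R).
Proof. by move=> a_le; apply: upper_level_shift; rewrite a_le lexx. Qed.

Lemma lower_level_bottom {a d : R} (k : int) :
  a <= pi - d -> lower_level a d (- pi + d + 2 * pi * k%:~R).
Proof. by move=> a_le; apply: lower_level_shift; rewrite lexx /=; lra. Qed.

Lemma upper_level_bound {S : R -> R} {a d c1 p : R} :
  periodic2pi S -> 0 <= c1 -> 0 <= p -> 0 <= d ->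
  (forall th, a <= th <= pi -> S th <= - (c1 * powR (pi - th) p)) ->
  forall b, upper_level a d b -> S b <= - (c1 * powR d p).
Proof.
move=> perS c1_ge0 p_ge0 d_ge0 S_right b [k /andP[b1 b2]].
rewrite -(subrK (2 * pi * k%:~R) b) periodic2pi_int //.
apply: le_trans (S_right _ _) _; first by rewrite b1 /=; lra.
by rewrite lerN2 ler_wpM2l // ge0_ler_powR // ?nnegrE; lra.
Qed.

Lemma lower_level_bound {S : R -> R} {a d c1 p : R} :
  periodic2pi S -> 0 <= c1 -> 0 <= p -> 0 <= d ->
  (forall th, - pi <= th <= - a -> c1 * powR (th + pi) p <= S th) ->
  forall b, lower_level a d b -> c1 * powR d p <= S b.
Proof.
move=> perS c1_ge0 p_ge0 d_ge0 S_left b [k /andP[b1 b2]].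
rewrite -(subrK (2 * pi * k%:~R) b) periodic2pi_int //.
apply: le_trans (S_left _ _); last by rewrite b2 andbT; lra.
by rewrite ler_wpM2l // ge0_ler_powR // ?nnegrE; lra.
Qed.

End Levels.

Section Continuity.
Context {R : realType}.

Lemma lipschitz_constant_ge0 {f : R -> R} {L : R} :
  (forall x y, `|f x - f y| <= L * `|x - y|) -> 0 <= L.
Proof. by move=> hL; have := hL 1 0; rewrite subr0 normr1 mulr1; apply: le_trans. Qed.

Lemma lipschitz_fun_continuous {f : R -> R} : lipschitz_fun f -> continuous f.
Proof.
move=> [L hL] x; apply/cvgrPdist_lt => e e_gt0.
have L_ge0 := lipschitz_constant_ge0 hL.
exists (e / (L + 1)) => /=; first by rewrite divr_gt0 //; lra.
move=> y /= xy; apply: le_lt_trans (hL x y) _.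
have : `|x - y| * (L + 1) < e by rewrite -ltr_pdivlMr //; lra.
by have : 0 <= `|x - y| by []; nra.
Qed.

Lemma continuous_itvcc_of_itvcy {f : R -> R} {t0 a : R} (b : R) : t0 <= a ->
  {within `[t0, +oo[, continuous f} -> {within `[a, b], continuous f}.
Proof.
move=> t0a; apply: continuous_subspaceW => x.
by rewrite /= !in_itv /= andbT => /andP[ax _]; apply: le_trans ax.
Qed.

Lemma continuous_itvcy_sub {f : R -> R} {t0 a : R} : t0 <= a ->
  {within `[t0, +oo[, continuous f} -> {within `[a, +oo[, continuous f}.
Proof.
move=> t0a; apply: continuous_subspaceW => x.
by rewrite /= !in_itv /= !andbT; apply: le_trans.
Qed.

Lemma continuous_itvcy_of_derive {f df : R -> R} {a : R} :
  (forall t, a < t -> is_derive t 1 f (df t)) -> f t @[t --> a^'+] --> f a ->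
  {within `[a, +oo[, continuous f}.
Proof.
move=> hd fa; apply/continuous_within_itvcyP; split => // x.
rewrite in_itv /= andbT => /hd hdx.
by apply/differentiable_continuous/derivable1_diffP; exact: ex_derive.
Qed.

Lemma compact_sublevel_itv {f : R -> R} {a b : R} (c : R) :
  {within `[a, b], continuous f} -> compact ([set t | f t <= c] `&` `[a, b]).
Proof.
move=> cf; apply: (subclosed_compact _ (@segment_compact _ a b)); last by move=> t [].
rewrite closed_setIS; last exact: interval_closed.
apply: (@preimage_closed (subspace `[a, b]) _ f [set x | x <= c]); last exact: closed_le.
by move=> x _; apply: cf.
Qed.

Lemma sublevel_itv_first {f : R -> R} {a b c : R} :
  {within `[a, b], continuous f} -> (exists2 t, t \in `[a, b] & f t <= c) ->
  exists2 s, s \in `[a, b] & f s <= c /\ forall t, a <= t < s -> c < f t.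
Proof.
move=> cf [t1 t1ab ft1].
have id_cont : {within [set t | f t <= c] `&` `[a, b], continuous id}.
  by apply: continuous_subspaceT => x; apply: cvg_id.
have [s] := compact_EVT_min (ex_intro _ t1 (conj ft1 t1ab)) (compact_sublevel_itv c cf) id_cont.
rewrite inE => -[fs sab] hs; exists s => //; split => // t /andP[ta ts].
rewrite ltNge; apply/negP => ft.
have : s <= t by apply: hs; rewrite inE; split; rewrite //= in_itv /= ta (le_trans (ltW ts)) //; case/andP: sab.
by rewrite leNgt ts.
Qed.

Lemma sublevel_itv_last {f : R -> R} {a b c : R} :
  {within `[a, b], continuous f} -> (exists2 t, t \in `[a, b] & f t <= c) ->
  exists2 s, s \in `[a, b] & f s <= c /\ forall t, s < t <= b -> c < f t.
Proof.
move=> cf [t1 t1ab ft1].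
have id_cont : {within [set t | f t <= c] `&` `[a, b], continuous id}.
  by apply: continuous_subspaceT => x; apply: cvg_id.
have [s] := compact_EVT_max (ex_intro _ t1 (conj ft1 t1ab)) (compact_sublevel_itv c cf) id_cont.
rewrite inE => -[fs sab] hs; exists s => //; split => // t /andP[st tb].
rewrite ltNge; apply/negP => ft.
have : t <= s by apply: hs; rewrite inE; split; rewrite //= in_itv /= tb andbT (le_trans _ (ltW st)) //; case/andP: sab.
by rewrite leNgt st.
Qed.

Lemma stays_below_of_linear_derive {f g : R -> R} (C : R) {b t0 T : R} : 0 <= C ->
  {within `[t0, +oo[, continuous f} ->
  (forall t, t0 < t -> is_derive t 1 f (g t)) ->
  (forall t, t0 < t < T -> b < f t -> g t <= C * (f t - b)) ->
  f t0 <= b -> forall t, t0 <= t <= T -> f t <= b.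
Proof.
move=> C_ge0 cf df hg ft0 t1 /andP[t01 t1T]; rewrite leNgt; apply/negP => ft1.
have t0_in : t0 \in `[t0, t1] by rewrite in_itv /= lexx t01.
have [s s_in [fs above]] := sublevel_itv_last (continuous_itvcc_of_itvcy t1 (lexx _) cf)
  (ex_intro2 _ _ t0 t0_in ft0).
move: s_in; rewrite in_itv /= => /andP[t0s st1].
have st1' : s < t1 by rewrite lt_neqAle st1 andbT; apply: contraTneq ft1 => <-; rewrite -leNgt.
(* On a window of length at most 1/(C+1) after the last visit s below b,
   the mean value theorem at the maximum point m forces f m <= b. *)
set t2 := Num.min t1 (s + (C + 1)^-1).
have st2 : s < t2 by rewrite lt_min st1' ltrDl invr_gt0; lra.
have [m m_in fm_max] := EVT_max (ltW st2) (continuous_itvcc_of_itvcy t2 t0s cf).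
move: (m_in); rewrite in_itv /= => /andP[sm mt2].
have t2t1 : t2 <= t1 by rewrite ge_min lexx.
have b_fm : b < f m.
  apply: lt_le_trans (above t2 _) (fm_max t2 _); first by rewrite st2.
  by rewrite in_itv /= (ltW st2) lexx.
have sm' : s < m by rewrite lt_neqAle sm andbT; apply: contraTneq b_fm => <-; rewrite -leNgt.
have df_sm x : x \in `]s, m[ -> is_derive x 1 f (g x).
  by rewrite in_itv /= => /andP[sx _]; apply: df; lra.
have [c c_in fmfs] := MVT sm' df_sm (continuous_itvcc_of_itvcy m t0s cf).
move: c_in; rewrite in_itv /= => /andP[sc cm].
have b_fc : b < f c by apply: above; apply/andP; split; lra.
have fc_fm : f c <= f m by apply: fm_max; rewrite in_itv /=; apply/andP; split; lra.
have gc_le : g c <= C * (f m - b).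
  apply: le_trans (hg c _ b_fc) _; first by apply/andP; split; lra.
  by apply: ler_wpM2l => //; lra.
have ms_le : (m - s) * (C + 1) <= 1.
  rewrite -ler_pdivlMr; last lra.
  by rewrite div1r lerBlDl; apply: le_trans mt2 _; rewrite ge_min lexx orbT.
nra.
Qed.

Lemma gt_bootstrap {g : R -> R} {a c c' : R} : c < c' ->
  {within `[a, +oo[, continuous g} ->
  (forall T, a <= T -> (forall t, a < t < T -> c <= g t) -> c' <= g T) ->
  forall t, a <= t -> c < g t.
Proof.
move=> cc' cg boot t1 at1; rewrite ltNge; apply/negP => gt1.
have t1_in : t1 \in `[a, t1] by rewrite in_itv /= at1 lexx.
have [s s_in [gs above]] := sublevel_itv_first (continuous_itvcc_of_itvcy t1 (lexx _) cg)
  (ex_intro2 _ _ t1 t1_in gt1).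
move: s_in; rewrite in_itv /= => /andP[as_ _].
have : c' <= g s by apply: boot => // t /andP[ta ts]; apply/ltW/above; rewrite ts (ltW ta).
lra.
Qed.

End Continuity.

Section Trajectory.
Context {R : realType}.
Context {r : R -> R} {k rho K t0 T : R}.
Hypothesis k_ge0 : 0 <= k.
Hypothesis r_bound : forall t, 0 <= r t <= K.
Hypothesis r_ge_rho : forall t, t0 < t < T -> rho <= r t.

Lemma trajectory_stays_below {x S : R -> R} {w b : R} : lipschitz_fun S ->
  {within `[t0, +oo[, continuous x} ->
  (forall t, t0 < t -> is_derive t 1 x (w + k * r t * S (x t))) ->
  S b <= 0 -> w + k * rho * S b <= 0 ->
  x t0 <= b -> forall t, t0 <= t <= T -> x t <= b.
Proof.
move=> [L hL] x_cont x_deriv Sb_le0 wb_le0; have L_ge0 := lipschitz_constant_ge0 hL.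
have K_ge0 : 0 <= K by case/andP: (r_bound t0) => r_ge0; apply: le_trans.
apply: (stays_below_of_linear_derive (k * K * L)) x_cont x_deriv _.
  by rewrite !mulr_ge0.
move=> t /r_ge_rho rho_r bx; have /andP[r_ge0 r_leK] := r_bound t.
have lipb : S (x t) - S b <= L * (x t - b).
  rewrite -[x t - b]gtr0_norm ?subr_gt0 //.
  by apply: le_trans (ler_norm _) (hL _ _).
have kr_ge0 : 0 <= k * r t by rewrite mulr_ge0.
have h1 : k * r t * (S (x t) - S b) <= k * K * (L * (x t - b)).
  apply: le_trans (ler_wpM2l kr_ge0 lipb) _.
  by apply: ler_wpM2r; [rewrite mulr_ge0 // subr_ge0 ltW | apply: ler_wpM2l].
have h2 : k * r t * S b <= k * rho * S b by apply: ler_wnM2r => //; apply: ler_wpM2l.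
lra.
Qed.

Lemma trajectory_stays_above {x S : R -> R} {w b : R} : lipschitz_fun S ->
  {within `[t0, +oo[, continuous x} ->
  (forall t, t0 < t -> is_derive t 1 x (w + k * r t * S (x t))) ->
  0 <= S b -> 0 <= w + k * rho * S b ->
  b <= x t0 -> forall t, t0 <= t <= T -> b <= x t.
Proof.
move=> [L hL] x_cont x_deriv Sb_ge0 wb_ge0 bx0 t tI; rewrite -lerN2.
apply: (@trajectory_stays_below (fun t => - x t) (fun y => - S (- y)) (- w)) => //.
- exists L => u v; rewrite opprK addrC.
  by apply: le_trans (hL _ _) _; rewrite opprK addrC.
- by move=> u; apply: continuousN; apply: x_cont.
- move=> u /x_deriv du; rewrite opprK mulrN -opprD; exact: is_deriveN.
- by rewrite opprK oppr_le0.
- by rewrite opprK mulrN -opprD oppr_le0.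
- by rewrite lerN2.
Qed.
End Trajectory.

Section Oscillation.
Context {R : realType}.
Context {f : R -> R} {a d : R}.
Hypothesis f_cont : {within `[0, +oo[, continuous f}.
Hypothesis below_upper : forall {b t0}, upper_level a d b -> 0 <= t0 ->
  f t0 <= b -> forall {t}, t0 <= t -> f t <= b.
Hypothesis above_lower : forall {b t0}, lower_level a d b -> 0 <= t0 ->
  b <= f t0 -> forall {t}, t0 <= t -> b <= f t.

Lemma trapped_outside_gap {k : int} : 0 < a -> 0 <= d -> a < pi - d ->
  - pi + d <= f 0 - 2 * pi * k%:~R <= pi - d ->
  exists l u, u - l < 2 * pi /\ forall t, 0 <= t -> l <= f t <= u.
Proof.
move=> a_gt0 d_ge0 a_lt; set P := 2 * pi * k%:~R; set y := f 0 - P => /andP[y_ge y_le].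
exists (Num.min y (- a) + P), (Num.max y a + P); split.
  have [ya|ay] := leP y a; have [yna|nay] := leP y (- a); lra.
move=> t t_ge0; apply/andP; split.
  apply: (above_lower _ (lexx 0)) => //; last by rewrite -lerBrDr ge_min lexx.
  by apply: lower_level_shift; rewrite ge_min lexx orbT /= le_min; apply/andP; split; lra.
apply: (below_upper _ (lexx 0)) => //; last by rewrite -lerBlDr le_max lexx.
by apply: upper_level_shift; rewrite le_max lexx orbT /= ge_max; apply/andP; split; lra.
Qed.

Lemma trapped_after_upward_exit {k : int} {t1 : R} : 0 < a -> 0 < d -> a < pi - d ->
  f 0 - 2 * pi * k%:~R < pi + d -> 0 <= t1 -> pi + d + 2 * pi * k%:~R <= f t1 ->
  exists l u, u - l < 2 * pi /\ forall t, 0 <= t -> l <= f t <= u.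
Proof.
move=> a_gt0 d_gt0 a_lt f0 t1_ge0 ft1; have a_le := ltW a_lt.
set P := 2 * pi * k%:~R in f0 ft1 *; pose Q : R := 2 * pi * (k + 1)%:~R.
have next : Q = P + 2 * pi by rewrite /Q intrD mulrDr mulr1.
have [m m_in m_min] := EVT_min t1_ge0 (continuous_itvcc_of_itvcy t1 (lexx 0) f_cont).
move: (m_in); rewrite in_itv /= => /andP[m_ge0 mt1].
have fm_gt : pi - d + P < f m.
  rewrite ltNge; apply/negP => fm.
  by have := below_upper (upper_level_top k a_le) m_ge0 fm mt1; rewrite -/P; lra.
exists (Num.min (f m) (- pi + d + Q)), (pi - d + Q); split.
  have : pi - d + P < Num.min (f m) (- pi + d + Q) by rewrite lt_min fm_gt /=; lra.
  lra.
move=> t t_ge0; apply/andP; split.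
  have [tt1|t1t] := leP t t1; rewrite ge_min.
    by rewrite m_min // in_itv /= t_ge0 tt1.
  have ft1' : - pi + d + Q <= f t1 by lra.
  by rewrite (above_lower (lower_level_bottom (k + 1) a_le) t1_ge0 ft1' (ltW t1t)) orbT.
by apply: (below_upper (upper_level_top (k + 1) a_le) (lexx 0)) => //; rewrite -/Q; lra.
Qed.

Lemma trapped_after_downward_exit {k : int} {t1 : R} : 0 < a -> 0 < d -> a < pi - d ->
  pi - d < f 0 - 2 * pi * k%:~R -> 0 <= t1 -> f t1 <= pi - d + 2 * pi * k%:~R ->
  exists l u, u - l < 2 * pi /\ forall t, 0 <= t -> l <= f t <= u.
Proof.
move=> a_gt0 d_gt0 a_lt f0 t1_ge0 ft1; have a_le := ltW a_lt.
set P := 2 * pi * k%:~R in f0 ft1 *; pose Q : R := 2 * pi * (k + 1)%:~R.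
have next : Q = P + 2 * pi by rewrite /Q intrD mulrDr mulr1.
have [m m_in m_max] := EVT_max t1_ge0 (continuous_itvcc_of_itvcy t1 (lexx 0) f_cont).
move: (m_in); rewrite in_itv /= => /andP[m_ge0 mt1].
have fm_lt : f m < - pi + d + Q.
  rewrite ltNge; apply/negP => fm.
  by have := above_lower (lower_level_bottom (k + 1) a_le) m_ge0 fm mt1; rewrite -/Q; lra.
exists (- pi + d + P), (Num.max (f m) (pi - d + P)); split.
  have : Num.max (f m) (pi - d + P) < - pi + d + Q by rewrite gt_max fm_lt /=; lra.
  lra.
move=> t t_ge0; apply/andP; split.
  by apply: (above_lower (lower_level_bottom k a_le) (lexx 0)) => //; rewrite -/P; lra.
have [tt1|t1t] := leP t t1; rewrite le_max.
  by rewrite m_max // in_itv /= t_ge0 tt1.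
by rewrite (below_upper (upper_level_top k a_le) t1_ge0 ft1 (ltW t1t)) orbT.
Qed.

Lemma trapped_from_gap {k : int} : 0 < a -> a < pi - d ->
  pi - d < f 0 - 2 * pi * k%:~R < pi + d ->
  exists l u, u - l < 2 * pi /\ forall t, 0 <= t -> l <= f t <= u.
Proof.
move=> a_gt0 a_lt /andP[f0_gt f0_lt]; have d_gt0 : 0 < d by lra.
have [[t1 t1_ge0 ft1]|stays_low] := pselect (exists2 t1, 0 <= t1 & pi + d + 2 * pi * k%:~R <= f t1).
  exact: (trapped_after_upward_exit a_gt0 d_gt0 a_lt f0_lt t1_ge0 ft1).
have [[t1 t1_ge0 ft1]|stays_high] := pselect (exists2 t1, 0 <= t1 & f t1 <= pi - d + 2 * pi * k%:~R).
  exact: (trapped_after_downward_exit a_gt0 d_gt0 a_lt f0_gt t1_ge0 ft1).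
exists (pi - d + 2 * pi * k%:~R), (pi + d + 2 * pi * k%:~R); split; first lra.
move=> t t_ge0; apply/andP; split.
  by rewrite leNgt; apply/negP => ft; apply: stays_high; exists t => //; apply: ltW.
by rewrite leNgt; apply/negP => ft; apply: stays_low; exists t => //; apply: ltW.
Qed.

Lemma oscillation_lt_2pi : 0 < a -> 0 <= d -> a < pi - d ->
  exists l u, u - l < 2 * pi /\ forall t, 0 <= t -> l <= f t <= u.
Proof.
move=> a_gt0 d_ge0 a_lt; have [k /andP[k1 k2]] := shift_2pi (f 0) (- pi + d).
have [f0_le|f0_gt] := leP (f 0 - 2 * pi * k%:~R) (pi - d).
  by apply: (trapped_outside_gap (k := k) a_gt0 d_ge0 a_lt); rewrite k1.
by apply: (trapped_from_gap (k := k) a_gt0 a_lt); rewrite f0_gt /=; lra.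
Qed.

End Oscillation.

Lemma ereal_sup_sub_inf_lt {R : realType} (f : R -> R) (D : set R) (l u x : R) :
  (forall t, D t -> l <= f t <= u) -> u - l < x ->
  (ereal_sup [set (f t)%:E | t in D] - ereal_inf [set (f t)%:E | t in D] < x%:E)%E.
Proof.
move=> flu ul.
have sup_le : (ereal_sup [set (f t)%:E | t in D] <= u%:E)%E.
  by apply: ge_ereal_sup => _ [t Dt <-]; rewrite lee_fin; case/andP: (flu t Dt).
have inf_ge : (l%:E <= ereal_inf [set (f t)%:E | t in D])%E.
  by apply: le_ereal_inf_tmp => _ [t Dt <-]; rewrite lee_fin; case/andP: (flu t Dt).
by apply: le_lt_trans (leeB sup_le inf_ge) _; rewrite -EFinB lte_fin.
Qed.

Section Synchronization.
Context {R : realType} {N : nat}.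
Context {S I : R -> R} {omega : 'I_N -> R} {theta : 'I_N -> R -> R}.
Context {alpha0 d kappa rho sigma c3 K : R} {A B : {set 'I_N}}.
Local Notation r := (orderR I theta).

Hypothesis kappa_ge0 : 0 <= kappa.
Hypothesis rho_ge0 : 0 <= rho.
Hypothesis sigma_ge0 : 0 <= sigma.
Hypothesis S_lip : lipschitz_fun S.
Hypothesis I_cont : continuous I.
Hypothesis I_bound : forall x, 0 <= I x <= K.
Hypothesis theta_cont : forall i, {within `[0, +oo[, continuous (theta i)}.
Hypothesis theta_deriv : forall (i : 'I_N) (t : R), 0 < t ->
  is_derive t 1 (theta i) (omega i + kappa * r t * S (theta i t)).
Hypothesis S_upper : forall {b}, upper_level alpha0 d b -> S b <= - sigma.
Hypothesis S_lower : forall {b}, lower_level alpha0 d b -> sigma <= S b.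
Hypothesis omega_B : forall {i}, i \in B -> `|omega i| <= kappa * rho * sigma.

Lemma orderR_bound t : 0 <= r t <= K.
Proof.
have K_ge0 : 0 <= K by case/andP: (I_bound 0) => I_ge0; apply: le_trans.
rewrite /orderR mulr_ge0 ?invr_ge0 ?sumr_ge0 //=; last by move=> j _; case/andP: (I_bound (theta j t)).
have [N0|N_neq0] := eqVneq (N%:R : R) 0; first by rewrite N0 invr0 mul0r.
rewrite ler_pdivrMl; last by rewrite lt0r N_neq0 ler0n.
have -> : N%:R * K = \sum_(j < N) K by rewrite sumr_const card_ord mulr_natl.
by apply: ler_sum => j _; case/andP: (I_bound (theta j t)).
Qed.

Lemma orderR_continuous : {within `[0, +oo[, continuous r}.
Proof.
move=> x; apply: (@continuousM _ _ (fun=> N%:R^-1)); first exact: cvg_cst.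
apply: (@continuous_big _ _ _ _ _ (@add_continuous R)) => j _ y.
by apply: continuous_comp; [exact: theta_cont | exact: I_cont].
Qed.

Lemma theta_below_upper_level {i b t0 T} : i \in B -> upper_level alpha0 d b ->
  0 <= t0 -> (forall t, t0 < t < T -> rho <= r t) ->
  theta i t0 <= b -> forall t, t0 <= t <= T -> theta i t <= b.
Proof.
move=> iB lev t0_ge0 r_ge.
have Sb := S_upper lev.
apply: (trajectory_stays_below kappa_ge0 orderR_bound r_ge S_lip
  (continuous_itvcy_sub t0_ge0 (theta_cont i))).
- by move=> t t0t; apply: theta_deriv; apply: le_lt_trans t0t.
- by apply: le_trans Sb _; rewrite oppr_le0.
- have : kappa * rho * S b <= kappa * rho * (- sigma) by rewrite ler_wpM2l ?mulr_ge0.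
  have := le_trans (ler_norm _) (omega_B iB); lra.
Qed.

Lemma theta_above_lower_level {i b t0 T} : i \in B -> lower_level alpha0 d b ->
  0 <= t0 -> (forall t, t0 < t < T -> rho <= r t) ->
  b <= theta i t0 -> forall t, t0 <= t <= T -> b <= theta i t.
Proof.
move=> iB lev t0_ge0 r_ge.
have Sb := S_lower lev.
apply: (trajectory_stays_above kappa_ge0 orderR_bound r_ge S_lip
  (continuous_itvcy_sub t0_ge0 (theta_cont i))).
- by move=> t t0t; apply: theta_deriv; apply: le_lt_trans t0t.
- exact: le_trans Sb.
- have : kappa * rho * sigma <= kappa * rho * S b by rewrite ler_wpM2l ?mulr_ge0.
  have := omega_B iB; rewrite ler_norml => /andP[]; lra.
Qed.

Hypothesis alpha0_gt0 : 0 < alpha0.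
Hypothesis d_ge0 : 0 <= d.
Hypothesis alpha0_lt : alpha0 < pi - d.
Hypothesis AB : A \subset B.
Hypothesis theta0_A : forall {i}, i \in A -> - pi + d <= theta i 0 <= pi - d.
Hypothesis I_min : forall th, - pi <= th <= pi ->
  forall phi, `|phi| <= Num.max `|th| alpha0 -> c3 * I th <= I phi.
Hypothesis mass_A : rho < c3 * (N%:R^-1 * \sum_(i in A) I (theta i 0)).

Lemma initial_level_le {i} : i \in A -> Num.max `|theta i 0| alpha0 <= pi - d.
Proof.
move=> iA; rewrite ge_max (ltW alpha0_lt) andbT ler_norml.
by case/andP: (theta0_A iA) => th0_ge ->; rewrite andbT; lra.
Qed.

Lemma theta_A_band {T i t} : (forall s, 0 < s < T -> rho <= r s) ->
  i \in A -> 0 <= t <= T -> `|theta i t| <= Num.max `|theta i 0| alpha0.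
Proof.
move=> r_ge iA tI; have iB : i \in B by apply: (fintype.subsetP AB).
set m := Num.max `|theta i 0| alpha0.
have m_ge : alpha0 <= m by rewrite le_max lexx orbT.
have m_le : m <= pi - d := initial_level_le iA.
have up : upper_level alpha0 d m by exists 0; rewrite mulr0z mulr0 subr0 m_ge m_le.
have low : lower_level alpha0 d (- m).
  by exists 0; rewrite mulr0z mulr0 subr0; apply/andP; split; lra.
have : `|theta i 0| <= m by rewrite le_max lexx.
rewrite !ler_norml => /andP[th0_ge th0_le]; apply/andP; split.
  exact: (theta_above_lower_level iB low (lexx 0) r_ge th0_ge).
exact: (theta_below_upper_level iB up (lexx 0) r_ge th0_le).
Qed.

Lemma orderR_ge_mass T : 0 <= T -> (forall t, 0 < t < T -> rho <= r t) ->
  c3 * (N%:R^-1 * \sum_(i in A) I (theta i 0)) <= r T.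
Proof.
move=> T_ge0 r_ge; rewrite /orderR mulrCA ler_wpM2l ?invr_ge0 // mulr_sumr.
apply: (@le_trans _ _ (\sum_(i in A) I (theta i T))).
  apply: ler_sum => i iA; apply: I_min.
    by have := d_ge0; case/andP: (theta0_A iA); lra.
  by apply: (theta_A_band r_ge iA); rewrite T_ge0 lexx.
rewrite [X in _ <= X](bigID (mem A)) /= lerDl sumr_ge0 // => j _.
by case/andP: (I_bound (theta j T)).
Qed.

Lemma orderR_gt_rho t : 0 <= t -> rho < r t.
Proof. by apply: (gt_bootstrap mass_A orderR_continuous) => T; apply: orderR_ge_mass. Qed.

Lemma theta_A_in_band i t : i \in A -> 0 <= t -> - pi + d <= theta i t <= pi - d.
Proof.
move=> iA t_ge0.
have r_ge s : 0 < s < t -> rho <= r s by case/andP => s_gt0 _; apply/ltW/orderR_gt_rho/ltW.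
have := @theta_A_band t i t r_ge iA; rewrite t_ge0 lexx => /(_ isT) /le_trans.
move=> /(_ _ (initial_level_le iA)); rewrite ler_norml => /andP[lo hi].
by rewrite hi andbT; lra.
Qed.

Lemma theta_B_oscillation i : i \in B ->
  (ereal_sup [set (theta i t)%:E | t in [set t : R | (0 <= t)%R]]
   - ereal_inf [set (theta i t)%:E | t in [set t : R | (0 <= t)%R]] < (2 * pi)%:E)%E.
Proof.
move=> iB.
have r_ge t0 T : 0 <= t0 -> forall t, t0 < t < T -> rho <= r t.
  by move=> t0_ge0 t /andP[t0t _]; apply/ltW/orderR_gt_rho; apply: le_trans (ltW t0t).
have below b t0 : upper_level alpha0 d b -> 0 <= t0 ->
    theta i t0 <= b -> forall t, t0 <= t -> theta i t <= b.
  move=> up t0_ge0 h t t0t.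
  by apply: (theta_below_upper_level iB up t0_ge0 (r_ge t0 t t0_ge0) h); rewrite t0t lexx.
have above b t0 : lower_level alpha0 d b -> 0 <= t0 ->
    b <= theta i t0 -> forall t, t0 <= t -> b <= theta i t.
  move=> low t0_ge0 h t t0t.
  by apply: (theta_above_lower_level iB low t0_ge0 (r_ge t0 t t0_ge0) h); rewrite t0t lexx.
have [l [u [ul hlu]]] := oscillation_lt_2pi (theta_cont i) below above
  alpha0_gt0 d_ge0 alpha0_lt.
exact: ereal_sup_sub_inf_lt hlu ul.
Qed.

Lemma synchronization :
  (forall t, 0 <= t -> rho < r t) /\
  (forall i t, i \in A -> 0 <= t -> - pi + d <= theta i t <= pi - d) /\
  (forall i, i \in B ->
     (ereal_sup [set (theta i t)%:E | t in [set t : R | (0 <= t)%R]]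
      - ereal_inf [set (theta i t)%:E | t in [set t : R | (0 <= t)%R]] < (2 * pi)%:E)%E).
Proof.
split; first exact: orderR_gt_rho.
by split; [exact: theta_A_in_band | exact: theta_B_oscillation].
Qed.

End Synchronization.

Lemma boundary_distance {R : realType} {M kappa rho c1 p a : R} :
  0 <= M -> 0 < rho -> 0 < c1 -> 0 < p -> a < pi ->
  M / (rho * c1 * powR (pi - a) p) < kappa ->
  [/\ 0 < kappa, 0 <= powR (M / (kappa * rho * c1)) p^-1,
      powR (M / (kappa * rho * c1)) p^-1 < pi - a &
      kappa * rho * (c1 * powR (powR (M / (kappa * rho * c1)) p^-1) p) = M].
Proof.
move=> M_ge0 rho_gt0 c1_gt0 p_gt0 a_lt kappa_gt.
have P_gt0 : 0 < powR (pi - a) p by apply: powR_gt0; lra.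
have kappa_gt0 : 0 < kappa.
  by apply: le_lt_trans kappa_gt; rewrite divr_ge0 // !mulr_ge0 // ltW.
have krc_gt0 : 0 < kappa * rho * c1 by rewrite !mulr_gt0.
set d := powR _ p^-1.
have d_ge0 : 0 <= d := powR_ge0 _ _.
have dp : powR d p = M / (kappa * rho * c1).
  by rewrite /d -powRrM mulVf ?gt_eqF // powRr1 // divr_ge0 // ltW.
split => //; last by rewrite dp mulrA mulrC divfK // gt_eqF.
rewrite ltNge; apply/negP => d_ge.
have : powR (pi - a) p <= powR d p by apply: ge0_ler_powR; rewrite ?nnegrE //; lra.
rewrite dp ler_pdivlMr //; move: kappa_gt; rewrite ltr_pdivrMr ?mulr_gt0 //.
have -> : kappa * (rho * c1 * powR (pi - a) p) = powR (pi - a) p * (kappa * rho * c1) by ring.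
lra.
Qed.

Theorem proposition2p19 (R : realType) (S I : R -> R)
  (alpha0 p q c1 c2 c3 : R) (N : nat) (omega : 'I_N -> R) (kappa : R)
  (theta : 'I_N -> R -> R) (rho : R) (A B : {set 'I_N}) :
  periodic2pi S -> periodic2pi I -> lipschitz_fun S -> lipschitz_fun I ->
  0 < alpha0 < pi -> 1 <= p -> 1 <= q -> 0 < c1 -> 0 < c2 -> 0 < c3 <= 1 ->
  (forall th, alpha0 <= th <= pi -> S th <= - (c1 * powR (pi - th) p)) ->
  (forall th, - pi <= th <= - alpha0 -> S th >= c1 * powR (th + pi) p) ->
  (forall th, - pi <= th <= pi -> 0 <= I th <= c2 * powR (pi - `|th|) q) ->
  (forall th, - pi <= th <= pi ->
     forall phi, `|phi| <= Num.max `|th| alpha0 -> I phi >= c3 * I th) ->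
  (* theta solves the ODE on [0, +oo), right-continuous at 0 *)
  (forall (i : 'I_N) (t : R), 0 < t ->
     is_derive t 1 (theta i)
       (omega i + kappa / N%:R * \sum_(j < N) I (theta j t) * S (theta i t))) ->
  (forall i : 'I_N, theta i t @[t --> (0:R)^'+] --> theta i 0) ->
  0 < rho -> rho <= supnorm I ->
  A \subset B ->
  (N%:R)^-1 * \sum_(i in A) I (theta i 0) > rho / c3 ->
  kappa > maxabs omega B / (rho * c1 * powR (pi - alpha0) p) ->
  let d := powR (maxabs omega B / (kappa * rho * c1)) (p^-1) in
  (forall i, i \in A -> - pi + d <= theta i 0 <= pi - d) ->
  (forall t, 0 <= t -> orderR I theta t > rho) /\
  (forall i t, i \in A -> 0 <= t -> - pi + d <= theta i t <= pi - d) /\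
  (forall i, i \in B ->
     (ereal_sup [set (theta i t)%:E | t in [set t : R | (0 <= t)%R]]
      - ereal_inf [set (theta i t)%:E | t in [set t : R | (0 <= t)%R]] < (2 * pi)%:E)%E).
Proof.
move=> perS perI S_lip I_lip /andP[alpha0_gt0 alpha0_lt_pi] p_ge1 q_ge1 c1_gt0 c2_gt0.
move=> /andP[c3_gt0 _] S_right S_left I_range I_min theta_deriv theta_right rho_gt0 _ AB.
move=> mass_A kappa_large d theta0_A.
have M_ge0 : 0 <= maxabs omega B := bigmax_ge_id _ _ _ _.
have [kappa_gt0 d_ge0 d_lt kappa_sigma] :=
  boundary_distance M_ge0 rho_gt0 c1_gt0 (lt_le_trans ltr01 p_ge1) alpha0_lt_pi kappa_large.
rewrite -/d in d_ge0 d_lt kappa_sigma.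
have [p_ge0 q_ge0] : 0 <= p /\ 0 <= q by split; lra.
have I_bound := periodic2pi_profile_bound perI (ltW c2_gt0) q_ge0 I_range.
have theta_deriv' (i : 'I_N) (t : R) : 0 < t ->
    is_derive t 1 (theta i) (omega i + kappa * orderR I theta t * S (theta i t)).
  by move=> t_gt0; rewrite /orderR mulrA -mulrA mulr_suml; apply: theta_deriv.
have theta_cont i : {within `[0, +oo[, continuous (theta i)} :=
  continuous_itvcy_of_derive (theta_deriv' i) (theta_right i).
have S_upper := upper_level_bound perS (ltW c1_gt0) p_ge0 d_ge0 S_right.
have S_lower := lower_level_bound perS (ltW c1_gt0) p_ge0 d_ge0 S_left.
have omega_B i : i \in B -> `|omega i| <= kappa * rho * (c1 * powR d p).
  by rewrite kappa_sigma; apply: le_bigmax_cond.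
have mass : rho < c3 * (N%:R^-1 * \sum_(i in A) I (theta i 0)) by rewrite mulrC -ltr_pdivrMr.
have alpha0_lt : alpha0 < pi - d by lra.
have sigma_ge0 : 0 <= c1 * powR d p by rewrite mulr_ge0 ?powR_ge0 ?ltW.
exact: (synchronization (ltW kappa_gt0) (ltW rho_gt0) sigma_ge0 S_lip
  (lipschitz_fun_continuous I_lip) I_bound theta_cont theta_deriv' S_upper S_lower omega_B
  alpha0_gt0 d_ge0 alpha0_lt AB theta0_A I_min mass).
Qed.
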